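(* Let $P=\langle \mathit{Init}(X),\mathit{Tr}(X,X'),\mathit{Bad}(X)\rangle$ be a safety problem over $\mathcal{T}$ and consider an execution of the procedure Quic3\_MakeSafe on $P$ in which a deterministic skolemization is used, i.e., in every satisfiability check $\mathit{qi}(Q_{i-1})\wedge\mathit{Tr}\wedge m'_{\mathit{sk}}$ the same fixed Skolem substitution $\mathit{sk}$ ($v_j\mapsto sk_j$) is applied. Then for each proof obligation $\langle m,\xi,i\rangle$, the number of proof obligations generated by applying the Predecessor step to $\langle m,\xi,i\rangle$ is finite.
   Context: $\mathcal{T}$ is the combined first-order theory of linear integer arithmetic and arrays, with sorts $\mathsf{int}$ and $\mathsf{array}$ (array indices and values have sort $\mathsf{int}$). Formulas may contain uninterpreted constants; among them are Skolem constants $\mathit{SK}=\{sk_j: j\in\mathbb{N}\}$ of sort $\mathsf{int}$. Variables of sort $\mathsf{int}$ are named $v_j$. A substitution is a partial sort-respecting map from variables to terms; $\varphi\sigma$ is its application; $\emptyset$ is the empty substitution; for substitutions $\sigma_1,\sigma_2$, $(\sigma_1\mid\sigma_2)(x)=\sigma_1(x)$ if $x\in\mathit{dom}(\sigma_1)$ and $\sigma_2(x)$ otherwise. The Skolem substitution $\mathit{sk}$ maps $v_j\mapsto sk_j$; $L_{\mathit{sk}}$ denotes $L\,\mathit{sk}$. $\mathit{Const}(\varphi)$, $\mathit{FVars}(\varphi)$ denote uninterpreted constants and free variables; $\forall\varphi$ / $\exists\varphi$ are universal / existential closures; $\varphi\Rightarrow\psi$ means $\varphi\to\psi$ is valid in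 $\mathcal{T}$. For a set $U$ of constants and formula $\varphi$, $\mathit{abs}(U,\varphi)=(\psi,\sigma)$: $\psi$ is obtained from $\varphi$ by replacing each constant of $U$ by a variable not free in $\varphi$, each $sk_j\in U$ being replaced by $v_j$; $\mathit{dom}(\sigma)=\mathit{FVars}(\psi)\setminus\mathit{FVars}(\varphi)$, $\psi\sigma=\varphi$, no constant of $U$ occurs in $\psi$. For ground $\varphi$, $\exists U\cdot\varphi$ denotes $\exists\psi$ with $(\psi,\_)=\mathit{abs}(U,\varphi)$. A partial model-based projection $\textsc{pMbp}(U,\varphi,M)=(\psi,W)$ (ground $\varphi$, $M\models\varphi$, $U\subseteq\mathit{Const}(\varphi)$) satisfies: $\psi$ is a conjunction of ground literals; $W\subseteq U$, $\mathit{Const}(\psi)\subseteq\mathit{Const}(\varphi)\setminus(U\setminus W)$; $\psi\Rightarrow\exists(U\setminus W)\cdot\varphi$; $M\models\psi$; for fixed $U,\varphi$ the set $\{\textsc{pMbp}(U,\varphi,M)\mid M\models\varphi\}$ is finite; $W$ contains no array constant. For ground $A,B$ with $A\wedge B$ unsatisfiable, $\textsc{Itp}(A,B)$ is a ground formula $I$ with $\mathit{Const}(I)\subseteq\mathit{Const}(A)\cap\mathit{Const}(B)$, $A\Rightarrow I$, $I\Rightarrow\neg B$. A safety problem has a finite set $X$ of constants disjoint from $\mathit{SK}$, primed copy $X'$, and quantifier-free ground $\mathit{Init},\mathit{Bad}$ over $X$, $\mathit{Tr}$ over $X\cup X'$; $\varphi'$ primes all constants of $X$ in $\varphi$, and $L$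 is the unprimed version of $L'$. $\mathcal{F}(A)=(A(X)\wedge\mathit{Tr}(X,X'))\vee\mathit{Init}(X')$. A frame $Q$ is a finite set of pairs $(\ell,\sigma)$ ($\ell$ quantifier-free over $X$ with free $\mathsf{int}$ variables, $\mathit{FVars}(\ell)\subseteq\mathit{dom}(\sigma)$, range of $\sigma$ in $X'\cup\mathit{SK}$); $\forall Q$ is the conjunction of the $\forall\ell$ and $\mathit{qi}(Q)$ the conjunction of the $\ell\sigma$. A proof obligation (POB) is $\langle m,\sigma,i\rangle$ with $m$ a conjunction of literals over $X$ with free $\mathsf{int}$ variables, $m\sigma$ ground, $i\in\mathbb N$. Procedure Quic3\_MakeSafe$(m_0,\sigma_0,i_0)$, operating on global frames $Q_0,Q_1,\dots$: set the queue $\mathcal Q=\{\langle m_0,\sigma_0,i_0\rangle\}$; while $\mathcal Q$ is nonempty, select some $\langle m,\xi,i\rangle\in\mathcal Q$; if $i=0$ return Cex; if $\mathit{qi}(Q_{i-1})\wedge\mathit{Tr}\wedge m'_{\mathit{sk}}$ is satisfiable with model $M$ (Predecessor step), compute $(\varphi,U)=\textsc{pMbp}(X'\cup\mathit{SK},\mathit{Tr}\wedge m'_{\mathit{sk}},M)$, $(\psi,\sigma)=\mathit{abs}(U,\varphi)$ and add $\langle\psi,\sigma,i-1\rangle$ to $\mathcal Q$; otherwise remove $\langle m,\xi,i\rangle$ from $\mathcal Q$, compute $L'=\textsc{Itp}(\mathit{qi}(Q_{i-1})\wedge\mathit{Tr},m'_{\mathit{sk}})$, $(\ell,\_)=\mathit{abs}(\mathit{SK},L)$,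 optionally replace $(\ell,\xi)$ by a quantified generalization $(g,\sigma)$, where $g$ is a formula with $g\sigma\equiv\ell\xi$, $\mathit{FVars}(\ell)\subseteq\mathit{FVars}(g)$ and $\mathcal F(\mathit{qi}(Q_{i-1}))\Rightarrow\forall g'$ (or keep $(\ell,\xi)$ unchanged), and add the resulting pair to $Q_j$ for all $j\le i$. When $\mathcal Q$ is empty, return Blocked. *)

From HB Require Import structures.
From mathcomp Require Export all_boot all_order all_algebra.
Set Implicit Arguments. Unset Strict Implicit. Unset Printing Implicit Defensive.
Import Order.TTheory GRing.Theory Num.Theory.

(*  int-sorted:  ISk j   = Skolem constant sk_j                         *)
(* The state constants X are given by two lists of names Xi (int) and  *)
(* Xa (arrays): X = {IC false n | n in Xi} u {AC false n | n in Xa},    *)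
(* X' the corresponding primed constants.  SK is disjoint from X.       *)
Inductive iconst := ISk (j : nat) | IC (primed : bool) (n : nat).
Definition iconst_enc (c : iconst) : nat + (bool * nat) :=
  match c with ISk j => inl j | IC b n => inr (b, n) end.
Definition iconst_dec (x : nat + (bool * nat)) : iconst :=
  match x with inl j => ISk j | inr (b, n) => IC b n end.
Lemma iconst_encK : cancel iconst_enc iconst_dec. Proof. by case. Qed.
HB.instance Definition _ := Countable.copy iconst (can_type iconst_encK).

Inductive aconst := AC (primed : bool) (n : nat).
Definition aconst_enc (c : aconst) : bool * nat := let: AC b n := c in (b, n).
Definition aconst_dec (x : bool * nat) : aconst := AC x.1 x.2.
Lemma aconst_encK : cancel aconst_enc aconst_dec. Proof. by case. Qed.
HB.instance Definition _ := Countable.copy aconst (can_type aconst_encK).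

Definition const := (iconst + aconst)%type.

Inductive aterm :=
  | AConst (c : aconst)
  | AStore (a : aterm) (i v : iterm)
with iterm :=
  | IVar (j : nat)
  | IConst (c : iconst)
  | INum (z : int)
  | IAdd (t u : iterm)
  | IScale (z : int) (t : iterm)
  | ISel (a : aterm) (i : iterm).

Inductive form :=
  | FTrue | FFalse
  | FEq (t u : iterm)
  | FLe (t u : iterm)
  | FDvd (k : int) (t : iterm)
  | FAEq (a b : aterm)
  | FNot (f : form)
  | FAnd (f g : form)
  | FOr (f g : form)
  | FImp (f g : form).

Record model := Model { mI : iconst -> int ; mA : aconst -> int -> int }.
Definition env := nat -> int.

Fixpoint evalA (M : model) (e : env) (a : aterm) {struct a} : int -> int :=
  match a with
  | AConst c => mA M c
  | AStore a i v =>
      let f := evalA M e a in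
      let ki := evalI M e i in
      let kv := evalI M e v in
      fun k => if k == ki then kv else f k
  end
with evalI (M : model) (e : env) (t : iterm) {struct t} : int :=
  match t with
  | IVar j => e j
  | IConst c => mI M c
  | INum z => z
  | IAdd t u => (evalI M e t + evalI M e u)%R
  | IScale z t => (z * evalI M e t)%R
  | ISel a i => evalA M e a (evalI M e i)
  end.

Fixpoint sat (M : model) (e : env) (f : form) : Prop :=
  match f with
  | FTrue => True
  | FFalse => False
  | FEq t u => evalI M e t = evalI M e u
  | FLe t u => (evalI M e t <= evalI M e u)%R
  | FDvd k t => (k %| evalI M e t)%Z
  | FAEq a b => evalA M e a =1 evalA M e b
  | FNot f => ~ sat M e f
  | FAnd f g => sat M e f /\ sat M e g
  | FOr f g => sat M e f \/ sat M e g
  | FImp f g => sat M e f -> sat M e g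
  end.

(* M |= f, for f with free variables: the universal closure holds in M;
   for ground f this is just M |= f. *)
Definition models (M : model) (f : form) : Prop := forall e, sat M e f.
Definition entails (f g : form) : Prop := forall M e, sat M e f -> sat M e g.
Definition equiv (f g : form) : Prop := entails f g /\ entails g f.

Fixpoint fvA (a : aterm) : seq nat :=
  match a with AConst _ => [::] | AStore a i v => fvA a ++ fvI i ++ fvI v end
with fvI (t : iterm) : seq nat :=
  match t with
  | IVar j => [:: j] | IConst _ | INum _ => [::]
  | IAdd t u => fvI t ++ fvI u | IScale _ t => fvI t
  | ISel a i => fvA a ++ fvI i
  end.
Fixpoint fvF (f : form) : seq nat :=
  match f with
  | FTrue | FFalse => [::]
  | FEq t u | FLe t u => fvI t ++ fvI u
  | FDvd _ t => fvI t
  | FAEq a b => fvA a ++ fvA b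
  | FNot f => fvF f
  | FAnd f g | FOr f g | FImp f g => fvF f ++ fvF g
  end.

Fixpoint constsA (a : aterm) : seq const :=
  match a with
  | AConst c => [:: inr c]
  | AStore a i v => constsA a ++ constsI i ++ constsI v end
with constsI (t : iterm) : seq const :=
  match t with
  | IVar _ | INum _ => [::] | IConst c => [:: inl c]
  | IAdd t u => constsI t ++ constsI u | IScale _ t => constsI t
  | ISel a i => constsA a ++ constsI i
  end.
Fixpoint constsF (f : form) : seq const :=
  match f with
  | FTrue | FFalse => [::]
  | FEq t u | FLe t u => constsI t ++ constsI u
  | FDvd _ t => constsI t
  | FAEq a b => constsA a ++ constsA b
  | FNot f => constsF f
  | FAnd f g | FOr f g | FImp f g => constsF f ++ constsF g
  end.

Definition ground (f : form) : bool := fvF f == [::].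

Definition is_atom (f : form) : bool :=
  match f with
  | FTrue | FFalse | FEq _ _ | FLe _ _ | FDvd _ _ | FAEq _ _ => true
  | _ => false end.
Definition is_lit (f : form) : bool :=
  is_atom f || (if f is FNot g then is_atom g else false).
Fixpoint is_cube (f : form) : bool :=
  match f with FAnd f g => is_cube f && is_cube g | _ => is_lit f end.

Fixpoint trA (fv_ : nat -> iterm) (fc : iconst -> iterm) (fa : aconst -> aconst)
    (a : aterm) : aterm :=
  match a with
  | AConst c => AConst (fa c)
  | AStore a i v => AStore (trA fv_ fc fa a) (trI fv_ fc fa i) (trI fv_ fc fa v)
  end
with trI (fv_ : nat -> iterm) (fc : iconst -> iterm) (fa : aconst -> aconst)
    (t : iterm) : iterm :=
  match t with
  | IVar j => fv_ j
  | IConst c => fc c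
  | INum z => INum z
  | IAdd t u => IAdd (trI fv_ fc fa t) (trI fv_ fc fa u)
  | IScale z t => IScale z (trI fv_ fc fa t)
  | ISel a i => ISel (trA fv_ fc fa a) (trI fv_ fc fa i)
  end.
Fixpoint trF fv_ fc fa (f : form) : form :=
  match f with
  | FTrue => FTrue | FFalse => FFalse
  | FEq t u => FEq (trI fv_ fc fa t) (trI fv_ fc fa u)
  | FLe t u => FLe (trI fv_ fc fa t) (trI fv_ fc fa u)
  | FDvd k t => FDvd k (trI fv_ fc fa t)
  | FAEq a b => FAEq (trA fv_ fc fa a) (trA fv_ fc fa b)
  | FNot f => FNot (trF fv_ fc fa f)
  | FAnd f g => FAnd (trF fv_ fc fa f) (trF fv_ fc fa g)
  | FOr f g => FOr (trF fv_ fc fa f) (trF fv_ fc fa g)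
  | FImp f g => FImp (trF fv_ fc fa f) (trF fv_ fc fa g)
  end.

Definition subst := nat -> option iterm.
Definition substF (s : subst) (f : form) : form :=
  trF (fun j => odflt (IVar j) (s j)) IConst id f.

Definition sk : subst := fun j => Some (IConst (ISk j)).

Definition primeI (Xi : seq nat) (c : iconst) : iconst :=
  match c with IC false n => if n \in Xi then IC true n else c | _ => c end.
Definition primeA (Xa : seq nat) (c : aconst) : aconst :=
  match c with AC false n => if n \in Xa then AC true n else c | _ => c end.
Definition unprimeI (Xi : seq nat) (c : iconst) : iconst :=
  match c with IC true n => if n \in Xi then IC false n else c | _ => c end.
Definition unprimeA (Xa : seq nat) (c : aconst) : aconst :=
  match c with AC true n => if n \in Xa then AC false n else c | _ => c end.
Definition primeF Xi Xa (f : form) : form :=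
  trF IVar (fun c => IConst (primeI Xi c)) (primeA Xa) f.
Definition unprimeF Xi Xa (f : form) : form :=
  trF IVar (fun c => IConst (unprimeI Xi c)) (unprimeA Xa) f.

Definition inX (Xi Xa : seq nat) (c : const) : bool :=
  match c with
  | inl (IC false n) => n \in Xi
  | inr (AC false n) => n \in Xa
  | _ => false end.
Definition inXp (Xi Xa : seq nat) (c : const) : bool :=
  match c with
  | inl (IC true n) => n \in Xi
  | inr (AC true n) => n \in Xa
  | _ => false end.
Definition isSk (c : const) : bool := if c is inl (ISk _) then true else false.
Definition inXpSK Xi Xa (c : const) : bool := inXp Xi Xa c || isSk c.

Definition abstractF (r : iconst -> option nat) (f : form) : form :=
  trF IVar (fun c => if r c is Some j then IVar j else IConst c) id f.

(* ∃U·φ holds in M (semantically): some M' differing from M at most on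
   the constants of U satisfies φ. *)
Definition agree_off (U : seq const) (M M' : model) : Prop :=
  (forall c, inl c \notin U -> mI M' c = mI M c) /\
  (forall c, inr c \notin U -> mA M' c = mA M c).
Definition ex_consts (U : seq const) (M : model) (f : form) : Prop :=
  exists M', agree_off U M M' /\ models M' f.

Fixpoint mem_list {T : Type} (x : T) (l : seq T) : Prop :=
  if l is y :: l' then y = x \/ mem_list x l' else False.

Definition abs_spec (abs : seq iconst -> form -> form * subst) : Prop :=
  forall (U : seq iconst) (phi : form), ground phi ->
  let: (psi, sigma) := abs U phi in
  exists r : iconst -> nat,
  [/\ (forall c, c \in U -> inl c \in constsF phi -> r c \notin fvF phi),
      (forall j, ISk j \in U -> r (ISk j) = j) &
      psi = abstractF (fun c => if c \in U then Some (r c) else None) phi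
  ] /\ [/\
      (forall j, sigma j <> None <-> (j \in fvF psi) && (j \notin fvF phi)),
      substF sigma psi = phi &
      (forall c, c \in U -> inl c \notin constsF psi)].

Definition setminus_W (U : seq const) (W : seq iconst) : seq const :=
  [seq c <- U | c \notin map inl W].

Definition pMbp_spec
    (pMbp : seq const -> form -> model -> form * seq iconst) : Prop :=
  (forall U phi M, ground phi -> models M phi -> {subset U <= constsF phi} ->
    let: (psi, W) := pMbp U phi M in
    [/\ is_cube psi, ground psi &
        {subset map inl W <= U}] /\ [/\
        {subset constsF psi <=
           [pred c | (c \in constsF phi) && (c \notin setminus_W U W)]},
        (forall M' e, sat M' e psi -> ex_consts (setminus_W U W) M' phi) &
        models M psi]) /\
  (forall U phi, ground phi -> {subset U <= constsF phi} ->
    exists L : seq (form * seq iconst),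
      forall M, models M phi -> mem_list (pMbp U phi M) L).
(* (W contains no array constant: by typing, W : seq iconst.) *)

Definition itp_ok (A B I : form) : Prop :=
  [/\ ground I,
      {subset constsF I <= [pred c | (c \in constsF A) && (c \in constsF B)]},
      entails A I & entails I (FNot B)].

Definition frame := seq (form * subst).
Definition qi (Q : frame) : form :=
  foldr (fun pr acc => FAnd (substF pr.2 pr.1) acc) FTrue Q.
Definition pob := (form * subst * nat)%type.

Definition Fop Xi Xa (Init Tr A : form) : form :=
  FOr (FAnd A Tr) (primeF Xi Xa Init).

(* m'_sk, with the fixed (deterministic) Skolem substitution *)
Definition skm Xi Xa (m : form) : form := substF sk (primeF Xi Xa m).

Definition sk_consts (f : form) : seq iconst :=
  pmap (fun c : const => if c is inl (ISk j) then Some (ISk j) else None)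
       (constsF f).

Definition pred_pob Xi Xa (Tr : form)
    (pMbp : seq const -> form -> model -> form * seq iconst)
    (abs : seq iconst -> form -> form * subst)
    (m : form) (k : nat) (M : model) : pob :=
  let phi := FAnd Tr (skm Xi Xa m) in
  let U := [seq c <- constsF phi | inXpSK Xi Xa c] in
  let: (phi1, W) := pMbp U phi M in
  let: (psi, sigma) := abs W phi1 in
  (psi, sigma, k).

Definition gen_ok Xi Xa (Init Tr : form) (Fk : frame)
    (l : form) (xi : subst) (g : form) (sigma : subst) : Prop :=
  (g = l /\ sigma = xi) \/
  [/\ equiv (substF sigma g) (substF xi l),
      {subset fvF l <= fvF g},
      (forall M, models M (Fop Xi Xa Init Tr (qi Fk)) -> models M (primeF Xi Xa g)),
      (forall j, j \in fvF g -> sigma j <> None) &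
      (forall j t, sigma j = Some t ->
         exists c, t = IConst c /\ inXpSK Xi Xa (inl c))].

Inductive result := Cex | Blocked.
Inductive state :=
  | Running (F : nat -> frame) (Qu : pob -> Prop)
  | Returned (r : result).
Inductive label :=
  | LCex (p : pob)
  | LPred (p q : pob)
  | LBlock (p : pob)
  | LEmpty.

Inductive step (Xi Xa : seq nat) (Init Tr : form)
    (pMbp : seq const -> form -> model -> form * seq iconst)
    (abs : seq iconst -> form -> form * subst) : state -> label -> state -> Prop :=
  | step_cex F Qu m xi :
      Qu (m, xi, 0) ->
      step Xi Xa Init Tr pMbp abs (Running F Qu) (LCex (m, xi, 0)) (Returned Cex)
  | step_pred F Qu m xi k M :
      Qu (m, xi, k.+1) ->
      models M (FAnd (qi (F k)) (FAnd Tr (skm Xi Xa m))) ->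
      step Xi Xa Init Tr pMbp abs (Running F Qu)
        (LPred (m, xi, k.+1) (pred_pob Xi Xa Tr pMbp abs m k M))
        (Running F (fun q => Qu q \/ q = pred_pob Xi Xa Tr pMbp abs m k M))
  | step_block F Qu m xi k L' g sigma :
      Qu (m, xi, k.+1) ->
      ~ (exists M e, sat M e (FAnd (qi (F k)) (FAnd Tr (skm Xi Xa m)))) ->
      itp_ok (FAnd (qi (F k)) Tr) (skm Xi Xa m) L' ->
      (let L := unprimeF Xi Xa L' in
       let l := (abs (sk_consts L) L).1 in
       gen_ok Xi Xa Init Tr (F k) l xi g sigma) ->
      step Xi Xa Init Tr pMbp abs (Running F Qu) (LBlock (m, xi, k.+1))
        (Running (fun j => if (j <= k.+1)%N then (g, sigma) :: F j else F j)
                 (fun q => Qu q /\ q <> (m, xi, k.+1)))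
  | step_empty F Qu :
      (forall q, ~ Qu q) ->
      step Xi Xa Init Tr pMbp abs (Running F Qu) LEmpty (Returned Blocked).

(* An execution (finite of length n if len = Some n, or infinite if
   len = None) from an initial state. *)
Definition in_range (len : option nat) (k : nat) : bool :=
  if len is Some n then (k < n)%N else true.
Definition is_execution Xi Xa Init Tr pMbp abs (init : state)
    (tr : nat -> state) (lab : nat -> label) (len : option nat) : Prop :=
  tr 0 = init /\
  forall k, in_range len k -> step Xi Xa Init Tr pMbp abs (tr k) (lab k) (tr k.+1).


(* A Predecessor step on <m, xi, k+1> with model M yields the abstraction of
   pMbp(U, Tr /\ m'_sk, M), where U and the formula depend on m alone: only M
   varies between two such steps.  Because the fixed substitution sk replaces
   every variable by a Skolem constant, Tr /\ m'_sk is ground, so the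
   finiteness requirement on pMbp leaves only finitely many projections, hence
   finitely many generated proof obligations. *)

Scheme aterm_ind_mut := Induction for aterm Sort Prop
  with iterm_ind_mut := Induction for iterm Sort Prop.
Combined Scheme term_ind_mut from aterm_ind_mut, iterm_ind_mut.

Section GroundTraversal.

Variables (fv_ : nat -> iterm) (fc : iconst -> iterm) (fa : aconst -> aconst).
Hypothesis fv_ground : forall j, fvI (fv_ j) = [::].
Hypothesis fc_ground : forall c, fvI (fc c) = [::].

Lemma fv_tr_nil :
  (forall a, fvA (trA fv_ fc fa a) = [::]) /\
  (forall t, fvI (trI fv_ fc fa t) = [::]).
Proof.
apply: term_ind_mut => //=.
- by move=> a -> i -> v ->.
- by move=> t -> u ->.
- by move=> a -> i ->.
Qed.

Lemma fv_trF_nil f : fvF (trF fv_ fc fa f) = [::].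
Proof.
have [fvA_nil fvI_nil] := fv_tr_nil.
by elim: f => /= [||t u|t u|k t|a b|f ->|f -> g ->|f -> g ->|f -> g ->];
  rewrite ?fvA_nil ?fvI_nil.
Qed.

End GroundTraversal.

Lemma skm_ground Xi Xa m : ground (skm Xi Xa m).
Proof. by rewrite /ground /skm /substF fv_trF_nil. Qed.

Lemma mem_list_map (T S : Type) (f : T -> S) x s :
  mem_list x s -> mem_list (f x) (map f s).
Proof. by elim: s => //= y s IHs [<-|/IHs]; [left | right]. Qed.

Section PredecessorStep.

Variables (Xi Xa : seq nat) (Init Tr : form).
Variable pMbp : seq const -> form -> model -> form * seq iconst.
Variable abs : seq iconst -> form -> form * subst.

Lemma step_predE s p q s' :
  step Xi Xa Init Tr pMbp abs s (LPred p q) s' ->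
  exists2 M, models M (FAnd Tr (skm Xi Xa p.1.1)) &
             q = pred_pob Xi Xa Tr pMbp abs p.1.1 p.2.-1 M.
Proof.
move E: (LPred p q) => l Hstep; case: Hstep E => // F Qu m xi k M _ HM [-> ->].
by exists M => // e; case: (HM e).
Qed.

Lemma pred_pob_finite m k :
  ground Tr -> pMbp_spec pMbp ->
  exists L : seq pob, forall M, models M (FAnd Tr (skm Xi Xa m)) ->
    mem_list (pred_pob Xi Xa Tr pMbp abs m k M) L.
Proof.
move=> Tr_ground [_ pMbp_finite].
set phi := FAnd Tr (skm Xi Xa m).
set U := [seq c <- constsF phi | inXpSK Xi Xa c].
have phi_ground : ground phi.
  by move: Tr_ground (skm_ground Xi Xa m); rewrite /ground /= => /eqP-> /eqP->.
have U_sub : {subset U <= constsF phi} by move=> c; rewrite mem_filter => /andP[].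
have [L HL] := pMbp_finite U phi phi_ground U_sub.
exists (map (fun r => let: (phi1, W) := r in let: (psi, sigma) := abs W phi1 in
                      (psi, sigma, k)) L).
by move=> M /HL; apply: mem_list_map.
Qed.

End PredecessorStep.

Theorem lemma5
  (Xi Xa : seq nat) (Init Tr Bad : form)
  (HInit : ground Init /\ {subset constsF Init <= inX Xi Xa})
  (HBad : ground Bad /\ {subset constsF Bad <= inX Xi Xa})
  (HTr : ground Tr /\
         {subset constsF Tr <= [pred c | inX Xi Xa c || inXp Xi Xa c]})
  (pMbp : seq const -> form -> model -> form * seq iconst)
  (HpMbp : pMbp_spec pMbp)
  (abs : seq iconst -> form -> form * subst)
  (Habs : abs_spec abs)
  (F0 : nat -> frame) (m0 : form) (sigma0 : subst) (i0 : nat)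
  (Hm0 : [/\ is_cube m0, {subset constsF m0 <= inX Xi Xa} &
             ground (substF sigma0 m0)])
  (tr : nat -> state) (lab : nat -> label) (len : option nat)
  (Hexec : is_execution Xi Xa Init Tr pMbp abs
             (Running F0 (fun q => q = (m0, sigma0, i0))) tr lab len) :
  forall p : pob, exists L : seq pob,
    forall k q, in_range len k -> lab k = LPred p q -> mem_list q L.
Proof.
move=> p.
have [L HL] := @pred_pob_finite Xi Xa Tr pMbp abs p.1.1 p.2.-1 (proj1 HTr) HpMbp.
exists L => n q /(proj2 Hexec) + lab_n; rewrite lab_n.
by move=> /step_predE[M HM ->]; apply: HL.
Qed.
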